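(* Let $\epsilon'>0$, $0<\mu'\le1$, $0<\Gamma_0\le1$, and let $\tau\subset\mathbb R^m$ be a $\Gamma_0$-flake with $L(\tau)\le3\epsilon'$ and $\ell(\tau)\ge\mu'\epsilon'$. Suppose there exist $p\in\tau$, a ball $B(C,R)$ circumscribing $\tau_p$ with $R<\frac32\epsilon'$, and $\tilde\delta_0\ge0$ with $d(p,\partial B(C,R))\le\tilde\delta_0\,\ell(\tau_p)$. Then $$d\big(p,S(\tau_p)\big)\le\Big(\frac{14}{\mu'}\tilde\delta_0+\frac{216}{\mu'^3}\Gamma_0\Big)R(\tau_p).$$
   Context: A simplex is a nonempty finite subset $\sigma\subset\mathbb R^m$ (vertices need not be affinely independent); $\dim\sigma=|\sigma|-1$; faces are nonempty subsets. For $p\in\sigma$, $\sigma_p=\sigma\setminus\{p\}$. $L(\sigma)$, $\ell(\sigma)$ are the largest and smallest distances between distinct vertices. Altitude $D(p,\sigma)=d(p,\mathrm{aff}(\sigma_p))$. Thickness of a $j$-simplex: $\Upsilon(\sigma)=1$ if $j=0$, else $\min_{p}D(p,\sigma)/(jL(\sigma))$. $\sigma$ is $\Gamma_0$-good if every $j$-face $\sigma^j$ satisfies $\Upsilon(\sigma^j)\ge\Gamma_0^j$; $\Gamma_0$-bad otherwise; a $\Gamma_0$-flake is a $\Gamma_0$-bad simplex whose proper faces are all $\Gamma_0$-good. A circumscribing ball of $\sigma$ is an open ball whose boundary contains all vertices of $\sigma$. If one exists, the circumcentre $c(\sigma)$ and circumradius $R(\sigma)$ are the centre and radius of the smallest one.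 The circumsphere is $S(\sigma)=\partial B(c(\sigma),R(\sigma))\cap\mathrm{aff}(\sigma)$. *)

(* classical reals. Points of R^m are functions nat -> R
   vanishing at coordinates >= m. *)
From Stdlib Require Import Reals Lra Lia List ClassicalEpsilon.
Import ListNotations.
Open Scope R_scope.

Definition Pt := nat -> R.

Definition inRm (m : nat) (x : Pt) : Prop := forall i, (m <= i)%nat -> x i = 0.

Definition sumsq (m : nat) (x : Pt) : R :=
  fold_right Rplus 0 (map (fun i => x i ^ 2) (seq 0 m)).

Definition dist (m : nat) (x y : Pt) : R := sqrt (sumsq m (fun i => x i - y i)).

(* infimum / supremum of a set of reals (chosen by epsilon; meaningful when they exist) *)
Definition is_lower_bound (P : R -> Prop) (d : R) : Prop := forall x, P x -> d <= x.
Definition is_glb (P : R -> Prop) (d : R) : Prop :=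
  is_lower_bound P d /\ (forall b, is_lower_bound P b -> b <= d).
Definition Inf (P : R -> Prop) : R := epsilon (inhabits 0) (is_glb P).
Definition Sup (P : R -> Prop) : R := epsilon (inhabits 0) (is_lub P).

Definition dist_set (m : nat) (x : Pt) (S : Pt -> Prop) : R :=
  Inf (fun d => exists y, S y /\ d = dist m x y).

Definition simplex (m : nat) (s : list Pt) : Prop :=
  s <> [] /\ NoDup s /\ forall v, In v s -> inRm m v.

Definition is_face (s t : list Pt) : Prop := t <> [] /\ NoDup t /\ incl t s.

Definition pt_eq_dec (x y : Pt) : {x = y} + {x <> y} := excluded_middle_informative (x = y).
Definition remove_pt (p : Pt) (s : list Pt) : list Pt := remove pt_eq_dec p s.

Definition Lmax (m : nat) (s : list Pt) : R :=
  Sup (fun d => exists x y, In x s /\ In y s /\ x <> y /\ d = dist m x y).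
Definition lmin (m : nat) (s : list Pt) : R :=
  Inf (fun d => exists x y, In x s /\ In y s /\ x <> y /\ d = dist m x y).

Definition lincomb (lam : list R) (s : list Pt) : Pt :=
  fun i => fold_right Rplus 0 (map (fun av => fst av * snd av i) (combine lam s)).
Definition aff (s : list Pt) (y : Pt) : Prop :=
  exists lam : list R, length lam = length s /\ fold_right Rplus 0 lam = 1 /\
    y = lincomb lam s.

Definition altitude (m : nat) (p : Pt) (s : list Pt) : R :=
  dist_set m p (aff (remove_pt p s)).

Definition thickness (m : nat) (s : list Pt) : R :=
  match (length s - 1)%nat with
  | O => 1
  | j => Inf (fun t => exists p, In p s /\
                 t = altitude m p s / (INR j * Lmax m s))
  end.

Definition good (m : nat) (G0 : R) (s : list Pt) : Prop :=
  forall t, is_face s t -> thickness m t >= G0 ^ (length t - 1).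
Definition bad (m : nat) (G0 : R) (s : list Pt) : Prop := ~ good m G0 s.
Definition flake (m : nat) (G0 : R) (s : list Pt) : Prop :=
  bad m G0 s /\ forall t, is_face s t -> (length t < length s)%nat -> good m G0 t.

Definition sphere (m : nat) (c : Pt) (r : R) (y : Pt) : Prop := inRm m y /\ dist m c y = r.

Definition circumscribes (m : nat) (s : list Pt) (c : Pt) (r : R) : Prop :=
  inRm m c /\ 0 < r /\ forall v, In v s -> dist m c v = r.

Definition is_circ (m : nat) (s : list Pt) (cr : Pt * R) : Prop :=
  circumscribes m s (fst cr) (snd cr) /\
  forall c' r', circumscribes m s c' r' -> snd cr <= r'.
Definition circ (m : nat) (s : list Pt) : Pt * R :=
  epsilon (inhabits ((fun _ => 0), 0)) (is_circ m s).
Definition circumcentre (m : nat) (s : list Pt) : Pt := fst (circ m s).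
Definition circumradius (m : nat) (s : list Pt) : R := snd (circ m s).

Definition circumsphere (m : nat) (s : list Pt) (y : Pt) : Prop :=
  sphere m (circumcentre m s) (circumradius m s) y /\ aff s y.

(** Let tau be a G0-flake, p a vertex, tau_p the opposite facet, B(C, Rad) a ball
    circumscribing tau_p and h = D(p, tau) = d(p, aff tau_p).  Writing ps for the foot of
    p on aff tau_p, the circumcentre c(tau_p) is the foot of C on aff tau_p, so by
    Pythagoras |d(c, ps) - R| R <= |d(ps, C) - Rad| 2 Rad; pushing ps radially onto the
    circumsphere gives the purely geometric estimate
        d(p, S(tau_p)) <= h + (d(p, dB(C, Rad)) + h) 2 Rad / R(tau_p).
    It remains to show h = O(G0 eps'/mu').  A flake has a vertex q with
    D(q, tau) < G0^j j L(tau), and two altitudes can be exchanged: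
    D(p, tau) D(q, tau_p) <= D(q, tau) d(p, aff tau_pq), both sides squared being the same
    Gram determinant; since the proper face tau_p is thick, D(q, tau_p) is large, hence
    h is small.  For G0 > mu'^2/36 the claim
    is trivial since d(p, S(tau_p)) <= L(tau) <= 3 eps'. *)

From Stdlib Require Import Reals List Lra Lia ClassicalEpsilon FunctionalExtensionality PropExtensionality.
Import ListNotations.
Open Scope R_scope.

Definition vadd (x y : Pt) : Pt := fun i => x i + y i.
Definition vsub (x y : Pt) : Pt := fun i => x i - y i.
Definition vscal (c : R) (x : Pt) : Pt := fun i => c * x i.
Definition vzero : Pt := fun _ => 0.

Ltac vec_eq := apply functional_extensionality; intro; unfold vadd, vsub, vscal, vzero; ring.

Fixpoint sum_over (l : list nat) (f : nat -> R) : R :=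
  match l with [] => 0 | i :: l => f i + sum_over l f end.

Lemma sum_over_ext l f g : (forall i, In i l -> f i = g i) -> sum_over l f = sum_over l g.
Proof. induction l; simpl; intros H; auto. rewrite H, IHl; auto. Qed.

Lemma sum_over_lin l f g a b :
  sum_over l (fun i => a * f i + b * g i) = a * sum_over l f + b * sum_over l g.
Proof. induction l; simpl. ring. rewrite IHl; ring. Qed.

Lemma sum_over_nonneg l f : (forall i, 0 <= f i) -> 0 <= sum_over l f.
Proof. induction l; simpl; intros H. lra. specialize (IHl H). specialize (H a). lra. Qed.

Lemma sum_over_zero l f : (forall i, 0 <= f i) -> sum_over l f = 0 -> forall i, In i l -> f i = 0.
Proof.
  induction l; simpl; intros H E i Hi. contradiction.
  assert (0 <= sum_over l f) by (apply sum_over_nonneg; auto). pose proof (H a).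
  destruct Hi as [<-|Hi]. lra. apply IHl; auto. lra.
Qed.

Definition dot (m : nat) (x y : Pt) : R := sum_over (seq 0 m) (fun i => x i * y i).

Lemma sumsq_dot m x : sumsq m x = dot m x x.
Proof.
  unfold sumsq, dot. induction (seq 0 m) as [|i l IH]; [reflexivity|].
  cbn [map fold_right sum_over]. rewrite IH; ring.
Qed.

Lemma dist_dot m x y : dist m x y = sqrt (dot m (vsub x y) (vsub x y)).
Proof. unfold dist. rewrite sumsq_dot. reflexivity. Qed.

Lemma dot_comm m x y : dot m x y = dot m y x.
Proof. unfold dot. apply sum_over_ext. intros; ring. Qed.

Lemma dot_lin_l m a b x y z :
  dot m (fun i => a * x i + b * y i) z = a * dot m x z + b * dot m y z.
Proof. unfold dot. rewrite <- sum_over_lin. apply sum_over_ext. intros; ring. Qed.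

Lemma dot_add_l m x y z : dot m (vadd x y) z = dot m x z + dot m y z.
Proof.
  rewrite <- (Rmult_1_l (dot m x z)), <- (Rmult_1_l (dot m y z)), <- dot_lin_l.
  unfold dot, vadd. apply sum_over_ext. intros; ring.
Qed.

Lemma dot_sub_l m x y z : dot m (vsub x y) z = dot m x z - dot m y z.
Proof.
  replace (dot m x z - dot m y z) with (1 * dot m x z + (-1) * dot m y z) by ring.
  rewrite <- dot_lin_l. unfold dot, vsub. apply sum_over_ext. intros; ring.
Qed.

Lemma dot_scal_l m c x z : dot m (vscal c x) z = c * dot m x z.
Proof.
  replace (c * dot m x z) with (c * dot m x z + 0 * dot m x z) by ring.
  rewrite <- dot_lin_l. unfold dot, vscal. apply sum_over_ext. intros; ring.
Qed.

Lemma dot_add_r m x y z : dot m z (vadd x y) = dot m z x + dot m z y.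
Proof. rewrite !(dot_comm m z). apply dot_add_l. Qed.
Lemma dot_sub_r m x y z : dot m z (vsub x y) = dot m z x - dot m z y.
Proof. rewrite !(dot_comm m z). apply dot_sub_l. Qed.
Lemma dot_scal_r m c x z : dot m z (vscal c x) = c * dot m z x.
Proof. rewrite !(dot_comm m z). apply dot_scal_l. Qed.

Lemma dot_nonneg m x : 0 <= dot m x x.
Proof. unfold dot. apply sum_over_nonneg. intros; nra. Qed.

Lemma dot_vzero m u : dot m vzero u = 0.
Proof. replace vzero with (vscal 0 vzero) by vec_eq. rewrite dot_scal_l. ring. Qed.

Lemma dot_zero_coord m x : dot m x x = 0 -> forall i, (i < m)%nat -> x i = 0.
Proof.
  intros H i Hi. unfold dot in H.
  assert (x i * x i = 0).
  { apply (sum_over_zero (seq 0 m) (fun i => x i * x i)); auto. intros; nra. apply in_seq; lia. }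
  nra.
Qed.

Lemma dot_zero_any m x y : dot m x x = 0 -> dot m x y = 0.
Proof.
  intros H. rewrite <- (dot_vzero m y). unfold dot. apply sum_over_ext.
  intros i Hi. apply in_seq in Hi. rewrite (dot_zero_coord m x H i) by lia. unfold vzero. ring.
Qed.

Lemma cauchy_schwarz m x y : (dot m x y)^2 <= dot m x x * dot m y y.
Proof.
  destruct (Req_dec (dot m y y) 0) as [E|E].
  - rewrite (dot_comm m x), (dot_zero_any m y x E), E. nra.
  - pose proof (dot_nonneg m y).
    set (t := dot m x y / dot m y y).
    pose proof (dot_nonneg m (vsub x (vscal t y))) as Hq.
    rewrite dot_sub_l, !dot_sub_r, !dot_scal_l, !dot_scal_r, (dot_comm m y x) in Hq.
    assert (0 < dot m y y) by lra.
    assert (0 <= dot m y y * (dot m x x - t * dot m x y - (t * dot m x y - t * (t * dot m y y))))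
      by (apply Rmult_le_pos; lra).
    replace (dot m y y * (dot m x x - t * dot m x y - (t * dot m x y - t * (t * dot m y y))))
      with (dot m x x * dot m y y - dot m x y ^ 2) in * by (unfold t; field; lra).
    lra.
Qed.

Lemma dot_le_norms m x y : dot m x y <= sqrt (dot m x x) * sqrt (dot m y y).
Proof.
  pose proof (cauchy_schwarz m x y).
  pose proof (sqrt_sqrt _ (dot_nonneg m x)). pose proof (sqrt_sqrt _ (dot_nonneg m y)).
  pose proof (sqrt_pos (dot m x x)). pose proof (sqrt_pos (dot m y y)).
  assert (0 <= sqrt (dot m x x) * sqrt (dot m y y)) by (apply Rmult_le_pos; auto).
  destruct (Rle_dec (dot m x y) (sqrt (dot m x x) * sqrt (dot m y y))) as [|n]; auto.
  nra.
Qed.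

Lemma dist_sq m x y : dist m x y * dist m x y = dot m (vsub x y) (vsub x y).
Proof. rewrite dist_dot. apply sqrt_sqrt, dot_nonneg. Qed.

Lemma dist_nonneg m x y : 0 <= dist m x y.
Proof. apply sqrt_pos. Qed.

Lemma dist_sym m x y : dist m x y = dist m y x.
Proof.
  rewrite !dist_dot. replace (vsub y x) with (vscal (-1) (vsub x y)) by vec_eq.
  rewrite dot_scal_l, dot_scal_r. f_equal. ring.
Qed.

Lemma dist_triangle m x y z : dist m x z <= dist m x y + dist m y z.
Proof.
  pose proof (dist_sq m x z) as Hxz.
  replace (vsub x z) with (vadd (vsub x y) (vsub y z)) in Hxz by vec_eq.
  rewrite dot_add_l, !dot_add_r, (dot_comm m (vsub y z)), <- !dist_sq in Hxz.
  pose proof (dot_le_norms m (vsub x y) (vsub y z)). rewrite <- !dist_dot in H.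
  pose proof (dist_nonneg m x y). pose proof (dist_nonneg m y z). pose proof (dist_nonneg m x z).
  nra.
Qed.

Lemma dist_rev m x y z : Rabs (dist m x z - dist m y z) <= dist m x y.
Proof.
  pose proof (dist_triangle m x y z). pose proof (dist_triangle m y x z).
  rewrite (dist_sym m y x) in H0. apply Rabs_le; lra.
Qed.

Lemma dist_zero m x y : inRm m x -> inRm m y -> dist m x y = 0 -> x = y.
Proof.
  intros Hx Hy H.
  assert (E : dot m (vsub x y) (vsub x y) = 0) by (rewrite <- dist_sq, H; ring).
  apply functional_extensionality; intro i. destruct (Nat.lt_ge_cases i m).
  - pose proof (dot_zero_coord m _ E i H0). unfold vsub in H1. lra.
  - rewrite Hx, Hy; auto.
Qed.

Lemma Inf_spec (P : R -> Prop) :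
  (exists x, P x) -> (exists b, is_lower_bound P b) -> is_glb P (Inf P).
Proof.
  intros [x Hx] [b Hb]. unfold Inf. apply epsilon_spec.
  destruct (completeness (fun y => P (- y))) as [M [HM1 HM2]].
  - exists (- b). intros y Hy. apply Hb in Hy. lra.
  - exists (- x). rewrite Ropp_involutive. auto.
  - exists (- M). split.
    + intros y Hy. assert (- y <= M) by (apply HM1; rewrite Ropp_involutive; auto). lra.
    + intros c Hc. assert (M <= - c). { apply HM2. intros y Hy. apply Hc in Hy. lra. } lra.
Qed.

Lemma Sup_spec (P : R -> Prop) : (exists x, P x) -> bound P -> is_lub P (Sup P).
Proof. intros Hx Hb. unfold Sup. apply epsilon_spec. destruct (completeness P Hb Hx) as [M HM]. eauto. Qed.

Lemma dist_set_glb m x (S : Pt -> Prop) :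
  (exists y, S y) -> is_glb (fun d => exists y, S y /\ d = dist m x y) (dist_set m x S).
Proof.
  intros [y Hy]. apply Inf_spec; eauto.
  exists 0. intros d [z [_ ->]]. apply dist_nonneg.
Qed.

Lemma dist_set_le m x (S : Pt -> Prop) y : S y -> dist_set m x S <= dist m x y.
Proof. intros Hy. apply (dist_set_glb m x S (ex_intro _ y Hy)). eauto. Qed.

Lemma dist_set_ge m x (S : Pt -> Prop) d :
  (exists y, S y) -> (forall y, S y -> d <= dist m x y) -> d <= dist_set m x S.
Proof. intros Hne H. apply (dist_set_glb m x S Hne). intros d' [z [Hz ->]]. auto. Qed.

Lemma dist_set_nonneg m x (S : Pt -> Prop) : (exists y, S y) -> 0 <= dist_set m x S.
Proof. intros H. apply dist_set_ge; auto. intros; apply dist_nonneg. Qed.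

(** * Affine hulls *)

Definition ladd (l1 l2 : list R) : list R := map (fun ab => fst ab + snd ab) (combine l1 l2).
Definition lscal (c : R) (l : list R) : list R := map (Rmult c) l.
Notation lsum l := (fold_right Rplus 0 l).

Lemma lincomb_cons a lam v s : lincomb (a :: lam) (v :: s) = vadd (vscal a v) (lincomb lam s).
Proof. reflexivity. Qed.
Lemma lincomb_nil_l s : lincomb [] s = vzero.
Proof. destruct s; reflexivity. Qed.
Lemma lincomb_nil_r l : lincomb l [] = vzero.
Proof. destruct l; reflexivity. Qed.

Lemma ladd_length l1 l2 : length l1 = length l2 -> length (ladd l1 l2) = length l1.
Proof. intros H. unfold ladd. rewrite length_map, length_combine. lia. Qed.
Lemma lscal_length c l : length (lscal c l) = length l.
Proof. apply length_map. Qed.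

Lemma lsum_ladd l1 l2 : length l1 = length l2 -> lsum (ladd l1 l2) = lsum l1 + lsum l2.
Proof.
  revert l2; induction l1; destruct l2; intros H; simpl in H; try discriminate. simpl; ring.
  change (ladd (a :: l1) (r :: l2)) with ((a + r) :: ladd l1 l2). simpl. rewrite IHl1 by lia. ring.
Qed.
Lemma lsum_lscal c l : lsum (lscal c l) = c * lsum l.
Proof. induction l; simpl. ring. rewrite IHl. ring. Qed.

Lemma lincomb_ladd l1 l2 s : length l1 = length s -> length l2 = length s ->
  lincomb (ladd l1 l2) s = vadd (lincomb l1 s) (lincomb l2 s).
Proof.
  revert l1 l2; induction s; intros l1 l2 H1 H2.
  - rewrite !lincomb_nil_r. vec_eq.
  - destruct l1, l2; simpl in *; try discriminate.
    change (ladd (r :: l1) (r0 :: l2)) with ((r + r0) :: ladd l1 l2).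
    rewrite !lincomb_cons, IHs by lia. vec_eq.
Qed.
Lemma lincomb_lscal c l s : lincomb (lscal c l) s = vscal c (lincomb l s).
Proof.
  revert l; induction s; intros l.
  - rewrite !lincomb_nil_r. vec_eq.
  - destruct l; simpl.
    + rewrite lincomb_nil_l. vec_eq.
    + change (lscal c (r :: l)) with ((c * r) :: lscal c l). rewrite !lincomb_cons, IHs. vec_eq.
Qed.

Lemma aff_translate s y z1 z2 t :
  aff s y -> aff s z1 -> aff s z2 -> aff s (vadd y (vscal t (vsub z1 z2))).
Proof.
  intros [ly [Ly [Sy ->]]] [l1 [L1 [S1 ->]]] [l2 [L2 [S2 ->]]].
  exists (ladd ly (ladd (lscal t l1) (lscal (-t) l2))).
  assert (length (lscal t l1) = length s) by (rewrite lscal_length; auto).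
  assert (length (lscal (-t) l2) = length s) by (rewrite lscal_length; auto).
  assert (length (ladd (lscal t l1) (lscal (-t) l2)) = length s) by (rewrite ladd_length; lia).
  split; [rewrite ladd_length; lia|]. split.
  - rewrite lsum_ladd, lsum_ladd, !lsum_lscal by lia. rewrite Sy, S1, S2. ring.
  - rewrite !lincomb_ladd, !lincomb_lscal by auto. vec_eq.
Qed.

Lemma aff_cons s v y : aff s y -> aff (v :: s) y.
Proof.
  intros [l [L [Sl ->]]]. exists (0 :: l). simpl. split; [lia|]. split; [lra|].
  rewrite lincomb_cons. vec_eq.
Qed.

Lemma aff_head v s : aff (v :: s) v.
Proof.
  exists (1 :: repeat 0 (length s)). simpl. rewrite repeat_length. split; auto. split.
  - assert (lsum (repeat 0 (length s)) = 0) by (induction (length s); simpl; lra). lra.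
  - rewrite lincomb_cons.
    replace (lincomb (repeat 0 (length s)) s) with vzero by (induction s; simpl; auto;
      rewrite lincomb_cons, <- IHs; vec_eq).
    vec_eq.
Qed.

Lemma aff_vertex s u : In u s -> aff s u.
Proof. induction s; simpl; intros H. contradiction. destruct H as [<-|H]. apply aff_head. apply aff_cons; auto. Qed.

Lemma aff_nil y : ~ aff [] y.
Proof. intros [l [L [Sl _]]]. destruct l; simpl in *; try discriminate. lra. Qed.

Lemma aff_single w y : aff [w] y -> y = w.
Proof.
  intros [l [L [Sl ->]]]. destruct l as [|a [|b l]]; simpl in *; try discriminate.
  rewrite lincomb_cons, lincomb_nil_l. replace a with 1 by lra. vec_eq.
Qed.

Lemma aff_decomp v s y b : aff (v :: s) y -> aff s b ->
  exists y' t, aff s y' /\ y = vadd y' (vscal t (vsub v b)).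
Proof.
  intros [l [L [Sl Ey]]] [lb [Lb [Sb Eb]]].
  destruct l as [|a rest]; simpl in L; try discriminate. simpl in Sl.
  exists (vadd (lincomb rest s) (vscal a b)), a. split.
  - exists (ladd rest (lscal a lb)). split; [rewrite ladd_length; rewrite ?lscal_length; lia|].
    split. rewrite lsum_ladd, lsum_lscal by (rewrite lscal_length; lia). rewrite Sb. lra.
    rewrite lincomb_ladd, lincomb_lscal, <- Eb by (rewrite ?lscal_length; lia). reflexivity.
  - rewrite Ey, lincomb_cons. vec_eq.
Qed.

Lemma aff_incl s s' y : (forall u, In u s -> aff s' u) -> aff s y -> aff s' y.
Proof.
  revert y; induction s as [|v s0 IH]; intros y Hu Hy.
  - exfalso; eapply aff_nil; eauto.
  - destruct s0 as [|b s1].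
    + apply aff_single in Hy. subst. apply Hu. simpl; auto.
    + destruct (aff_decomp v (b :: s1) y b Hy (aff_head b s1)) as [y' [t [Hy' ->]]].
      apply aff_translate; [apply IH | apply Hu | apply Hu]; simpl; auto.
      intros u Hu'. apply Hu. simpl; auto.
Qed.

Lemma aff_same s s' : (forall u, In u s <-> In u s') -> aff s = aff s'.
Proof.
  intros H. apply functional_extensionality; intro y. apply propositional_extensionality.
  split; apply aff_incl; intros u Hu; apply aff_vertex, H; auto.
Qed.

Lemma aff_inRm m s y : (forall v, In v s -> inRm m v) -> aff s y -> inRm m y.
Proof.
  intros Hv [l [L [_ ->]]]. revert l L Hv; induction s; intros l L Hv i Hi.
  - rewrite lincomb_nil_r. reflexivity.
  - destruct l; simpl in L; try discriminate. rewrite lincomb_cons. unfold vadd, vscal.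
    rewrite (Hv a (or_introl eq_refl) i Hi), (IHs l ltac:(lia)); auto. ring.
    intros v Hv'; apply Hv; simpl; auto.
Qed.

Lemma aff_dot_const m s u K y : (forall v, In v s -> dot m v u = K) -> aff s y -> dot m y u = K.
Proof.
  intros Hv [l [L [Sl ->]]].
  assert (forall l, length l = length s -> dot m (lincomb l s) u = K * lsum l).
  { clear L Sl l. induction s; intros l L.
    - destruct l; simpl in L; try discriminate. rewrite lincomb_nil_r, dot_vzero. simpl; ring.
    - destruct l; simpl in L; try discriminate. rewrite lincomb_cons, dot_add_l, dot_scal_l.
      rewrite IHs by (auto; intros; apply Hv; simpl; auto). rewrite Hv by (simpl; auto). simpl. ring. }
  rewrite H, Sl by auto. ring.
Qed.

(** * Orthogonal projection onto an affine hull *)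

Definition orth (m : nat) (s : list Pt) (u : Pt) : Prop :=
  forall y z, aff s y -> aff s z -> dot m u (vsub y z) = 0.
Definition foot (m : nat) (s : list Pt) (x P : Pt) : Prop := aff s P /\ orth m s (vsub x P).

Lemma pythagoras m s x P y : foot m s x P -> aff s y ->
  dist m x y * dist m x y = dist m x P * dist m x P + dist m P y * dist m P y.
Proof.
  intros [HP Ho] Hy. rewrite !dist_sq.
  replace (vsub x y) with (vadd (vsub x P) (vsub P y)) by vec_eq.
  rewrite dot_add_l, !dot_add_r, (dot_comm m (vsub P y) (vsub x P)), (Ho P y HP Hy). ring.
Qed.

Lemma foot_dist m s x P : foot m s x P -> dist_set m x (aff s) = dist m x P.
Proof.
  intros H. apply Rle_antisym.
  - apply dist_set_le, H.
  - apply dist_set_ge; [exists P; apply H|]. intros y Hy.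
    pose proof (pythagoras m s x P y H Hy).
    pose proof (dist_nonneg m x P). pose proof (dist_nonneg m x y). pose proof (dist_nonneg m P y).
    nra.
Qed.

Lemma foot_single m w x : foot m [w] x w.
Proof.
  split; [apply aff_head|]. intros y z Hy Hz. apply aff_single in Hy, Hz. subst.
  replace (vsub w w) with vzero by vec_eq. rewrite dot_comm. apply dot_vzero.
Qed.

Lemma vsub_decomp y' z' t1 t2 w :
  vsub (vadd y' (vscal t1 w)) (vadd z' (vscal t2 w)) = vadd (vsub y' z') (vscal (t1 - t2) w).
Proof. vec_eq. Qed.

(* Gram–Schmidt step: from the feet on aff s of x and of v one gets the foot of x on
   aff (v :: s), by adding the component of x - Px along w = v - Pv. *)
Lemma foot_cons m s v x Px Pv : foot m s x Px -> foot m s v Pv ->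
  dot m (vsub v Pv) (vsub v Pv) <> 0 ->
  foot m (v :: s) x
    (vadd Px (vscal (dot m (vsub x Px) (vsub v Pv) / dot m (vsub v Pv) (vsub v Pv)) (vsub v Pv))).
Proof.
  intros [HPx Ox] [HPv Ov] Hw. set (w := vsub v Pv) in *.
  set (t := dot m (vsub x Px) w / dot m w w).
  split.
  - apply aff_translate; [apply aff_cons; auto | apply aff_head | apply aff_cons; auto].
  - intros y z Hy Hz.
    destruct (aff_decomp v s y Pv Hy HPv) as [y' [t1 [Hy' ->]]].
    destruct (aff_decomp v s z Pv Hz HPv) as [z' [t2 [Hz' ->]]].
    fold w. rewrite vsub_decomp.
    replace (vsub x (vadd Px (vscal t w))) with (vsub (vsub x Px) (vscal t w)) by vec_eq.
    rewrite dot_add_r, !(dot_sub_l m (vsub x Px) (vscal t w)), !dot_scal_l, !dot_scal_r.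
    rewrite (Ox y' z' Hy' Hz'), (Ov y' z' Hy' Hz').
    unfold t. field. auto.
Qed.

(* Degenerate step: if v already lies in aff s, the foot does not move. *)
Lemma foot_cons_degenerate m s v x Px Pv : foot m s x Px -> foot m s v Pv ->
  dot m (vsub v Pv) (vsub v Pv) = 0 -> foot m (v :: s) x Px.
Proof.
  intros [HPx Ox] [HPv Ov] Hw. split; [apply aff_cons; auto|].
  intros y z Hy Hz.
  destruct (aff_decomp v s y Pv Hy HPv) as [y' [t1 [Hy' ->]]].
  destruct (aff_decomp v s z Pv Hz HPv) as [z' [t2 [Hz' ->]]].
  rewrite vsub_decomp, dot_add_r, dot_scal_r, (Ox y' z' Hy' Hz').
  rewrite dot_comm, (dot_zero_any m _ _ Hw). ring.
Qed.

Lemma foot_exists m s : s <> [] -> forall x, exists P, foot m s x P.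
Proof.
  induction s as [|v s IH]; intros Hne x. congruence.
  destruct s as [|b s']. exists v. apply foot_single.
  destruct (IH ltac:(congruence) x) as [Px HPx].
  destruct (IH ltac:(congruence) v) as [Pv HPv].
  destruct (Req_dec (dot m (vsub v Pv) (vsub v Pv)) 0).
  - exists Px. eapply foot_cons_degenerate; eauto.
  - eexists. eapply foot_cons; eauto.
Qed.

(* Distance to aff (v :: s) as a 2x2 Gram determinant, with u = x - Px, w = v - Pv:
   d(x, aff (v :: s))^2 |w|^2 = |u|^2 |w|^2 - (u.w)^2. *)
Lemma dist_aff_cons_sq m s x v Px Pv : foot m s x Px -> foot m s v Pv ->
  dot m (vsub v Pv) (vsub v Pv) <> 0 ->
  dist_set m x (aff (v :: s)) * dist_set m x (aff (v :: s)) * dot m (vsub v Pv) (vsub v Pv) =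
  dot m (vsub x Px) (vsub x Px) * dot m (vsub v Pv) (vsub v Pv) - (dot m (vsub x Px) (vsub v Pv))^2.
Proof.
  intros Hx Hv Hw. rewrite (foot_dist m _ _ _ (foot_cons m s v x Px Pv Hx Hv Hw)), dist_sq.
  set (w := vsub v Pv) in *. set (u := vsub x Px).
  set (t := dot m u w / dot m w w).
  replace (vsub x (vadd Px (vscal t w))) with (vsub u (vscal t w)) by (unfold u; vec_eq).
  rewrite !dot_sub_l, !dot_sub_r, !dot_scal_l, !dot_scal_r, (dot_comm m w u).
  unfold t. field. auto.
Qed.

(** * Circumcentres *)

Definition has_edge (s : list Pt) : Prop := exists v w, In v s /\ In w s /\ v <> w.

Lemma foot_equidistant m s c r f : circumscribes m s c r -> foot m s c f ->
  forall v, In v s -> dist m f v * dist m f v = r * r - dist m c f * dist m c f.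
Proof.
  intros [_ [_ Hc]] Hf v Hv. pose proof (pythagoras m s c f v Hf (aff_vertex s v Hv)).
  rewrite Hc in H by auto. lra.
Qed.

Lemma aff_equidistant_unique m s f1 f2 r1 r2 : (forall v, In v s -> inRm m v) ->
  aff s f1 -> aff s f2 ->
  (forall v, In v s -> dist m f1 v * dist m f1 v = r1) ->
  (forall v, In v s -> dist m f2 v * dist m f2 v = r2) -> f1 = f2.
Proof.
  intros Hin H1 H2 E1 E2.
  set (K := (dot m f1 f1 - dot m f2 f2 - (r1 - r2)) / 2).
  assert (HK : forall v, In v s -> dot m v (vsub f1 f2) = K).
  { intros v Hv. specialize (E1 v Hv). specialize (E2 v Hv).
    rewrite dist_sq, !dot_sub_l, !dot_sub_r, (dot_comm m v f1) in E1.
    rewrite dist_sq, !dot_sub_l, !dot_sub_r, (dot_comm m v f2) in E2.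
    rewrite dot_sub_r, (dot_comm m v f1), (dot_comm m v f2). unfold K. lra. }
  pose proof (aff_dot_const m s _ K f1 HK H1). pose proof (aff_dot_const m s _ K f2 HK H2).
  apply (dist_zero m); try (eapply aff_inRm; eauto).
  rewrite dist_dot, dot_sub_l, H, H0. rewrite Rminus_diag. apply sqrt_0.
Qed.

Lemma circumscribing_radius m s c r f0 r0 : s <> [] -> (forall v, In v s -> inRm m v) ->
  circumscribes m s c r -> aff s f0 -> (forall v, In v s -> dist m f0 v = r0) ->
  r * r = dist m c f0 * dist m c f0 + r0 * r0.
Proof.
  intros Hne Hin Hc Hf0 Hr0.
  destruct (foot_exists m s Hne c) as [f Hf].
  assert (f = f0) as ->.
  { apply (aff_equidistant_unique m s f f0 _ (r0 * r0) Hin (proj1 Hf) Hf0 (foot_equidistant m s c r f Hc Hf)).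
    intros v Hv. rewrite Hr0; auto. }
  destruct s as [|v s']; [congruence|].
  pose proof (foot_equidistant m _ c r f0 Hc Hf v (or_introl eq_refl)).
  rewrite Hr0 in H by (left; reflexivity). lra.
Qed.

Lemma foot_circumscribes m s C Rad c0 : (forall v, In v s -> inRm m v) -> has_edge s ->
  circumscribes m s C Rad -> foot m s C c0 ->
  exists r0, circumscribes m s c0 r0 /\ Rad * Rad = dist m C c0 * dist m C c0 + r0 * r0.
Proof.
  intros Hin [v0 [w0 [Hv0 [Hw0 Hvw]]]] Hc Hf.
  set (rho := Rad * Rad - dist m C c0 * dist m C c0).
  pose proof (foot_equidistant m s C Rad c0 Hc Hf) as Hrho. fold rho in Hrho.
  assert (c0in : inRm m c0) by (eapply aff_inRm; eauto; apply Hf).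
  assert (rho_pos : 0 < rho).
  { destruct (Rle_lt_dec rho 0); auto. exfalso.
    pose proof (Hrho v0 Hv0). pose proof (dist_nonneg m c0 v0).
    pose proof (Hrho w0 Hw0). pose proof (dist_nonneg m c0 w0).
    assert (dist m c0 v0 = 0) by nra. assert (dist m c0 w0 = 0) by nra.
    apply (dist_zero m) in H3, H4; auto. congruence. }
  exists (sqrt rho). split; [split; [auto|split]|].
  - apply sqrt_lt_R0; lra.
  - intros v Hv. rewrite <- (Hrho v Hv). symmetry. apply sqrt_square, dist_nonneg.
  - rewrite sqrt_sqrt by lra. unfold rho. ring.
Qed.

(* A circumscribing ball centred in aff s is the smallest one, hence gives (c(s), R(s)). *)
Lemma circ_of_aff_centre m s c0 r0 : (forall v, In v s -> inRm m v) ->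
  aff s c0 -> circumscribes m s c0 r0 ->
  circumcentre m s = c0 /\ circumradius m s = r0.
Proof.
  intros Hin Hc0 Hcirc.
  assert (Hne : s <> []) by (intros ->; eapply aff_nil; eauto).
  destruct Hcirc as [c0in [Hr0 Hc0v]].
  assert (Key : forall c r, circumscribes m s c r -> r * r = dist m c c0 * dist m c c0 + r0 * r0)
    by (intros; eapply circumscribing_radius; eauto).
  assert (Hmin : is_circ m s (c0, r0)).
  { split; [repeat split; auto|]. intros c' r' Hc'. simpl.
    pose proof (Key c' r' Hc'). pose proof (dist_nonneg m c' c0). destruct Hc' as [_ [Hr' _]]. nra. }
  assert (Hcirc : is_circ m s (circ m s)) by (unfold circ; apply epsilon_spec; eauto).
  unfold circumcentre, circumradius. destruct (circ m s) as [c1 r1].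
  destruct Hcirc as [Hc1 Hmin1]. simpl in *.
  pose proof (Hmin1 c0 r0 (conj c0in (conj Hr0 Hc0v))). pose proof (proj2 Hmin c1 r1 Hc1). simpl in H0.
  pose proof (Key c1 r1 Hc1). pose proof (dist_nonneg m c1 c0).
  assert (r1 = r0) as -> by lra.
  split; auto. apply (dist_zero m); [apply Hc1 | auto | nra].
Qed.

Lemma rem_in p s u : In u (remove_pt p s) <-> In u s /\ u <> p.
Proof. unfold remove_pt. split. apply in_remove. intros [H1 H2]. apply in_in_remove; auto. Qed.

Lemma rem_nodup p s : NoDup s -> NoDup (remove_pt p s).
Proof.
  unfold remove_pt. induction s; intros H; simpl. constructor.
  inversion H; subst. destruct (pt_eq_dec p a). auto.
  constructor; auto. intros Hin. apply in_remove in Hin. tauto.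
Qed.

Lemma rem_len p s : NoDup s -> In p s -> length (remove_pt p s) = (length s - 1)%nat.
Proof.
  unfold remove_pt. induction s; intros H Hp; simpl. contradiction.
  inversion H; subst. destruct (pt_eq_dec p a).
  - subst. rewrite notin_remove; auto. lia.
  - simpl. destruct Hp as [->|Hp]. congruence. rewrite IHs; auto.
    destruct s. contradiction. simpl; lia.
Qed.

Lemma rem_simplex m p s : simplex m s -> In p s -> (2 <= length s)%nat -> simplex m (remove_pt p s).
Proof.
  intros [_ [Hnd Hin]] Hp Hl. split; [|split].
  - intros E. pose proof (rem_len p s Hnd Hp). rewrite E in H. simpl in H. lia.
  - apply rem_nodup; auto.
  - intros v Hv. apply Hin, (rem_in p s v), Hv.
Qed.

Definition edge_lengths (m : nat) (s : list Pt) (d : R) : Prop :=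
  exists x y, In x s /\ In y s /\ x <> y /\ d = dist m x y.

Lemma edge_lengths_bound m s : bound (edge_lengths m s).
Proof.
  assert (Hpos : forall (f : Pt -> R) l, (forall x, 0 <= f x) -> 0 <= fold_right Rplus 0 (map f l)).
  { intros f l Hf. induction l; simpl; [lra|]. pose proof (Hf a). lra. }
  assert (Hsum : forall (f : Pt -> R) l u, (forall x, 0 <= f x) -> In u l ->
            f u <= fold_right Rplus 0 (map f l)).
  { intros f l u Hf. induction l; simpl; intros Hu; [contradiction|].
    pose proof (Hpos f l Hf). pose proof (Hf a).
    destruct Hu as [->|Hu]; [lra|]. specialize (IHl Hu). lra. }
  exists (fold_right Rplus 0 (map (fun u => fold_right Rplus 0 (map (dist m u) s)) s)).
  intros d [x [y [Hx [Hy [_ ->]]]]].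
  eapply Rle_trans; [apply (Hsum (dist m x) s y (dist_nonneg m x) Hy)|].
  apply (Hsum (fun u => fold_right Rplus 0 (map (dist m u) s))); auto.
  intros u. apply Hpos, dist_nonneg.
Qed.

Lemma edge_lengths_lb m s : exists b, is_lower_bound (edge_lengths m s) b.
Proof. exists 0. intros d [a [b [_ [_ [_ ->]]]]]. apply dist_nonneg. Qed.

Lemma Lmax_ge m s x y : In x s -> In y s -> x <> y -> dist m x y <= Lmax m s.
Proof.
  intros. apply (Sup_spec (edge_lengths m s)); [exists (dist m x y)|apply edge_lengths_bound|];
    exists x, y; auto.
Qed.

Lemma Lmax_le m s B : has_edge s ->
  (forall x y, In x s -> In y s -> x <> y -> dist m x y <= B) -> Lmax m s <= B.
Proof.
  intros [x [y [Hx [Hy Hxy]]]] H. apply (Sup_spec (edge_lengths m s)).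
  - exists (dist m x y), x, y; auto.
  - apply edge_lengths_bound.
  - intros d [a [b [Ha [Hb [Hab ->]]]]]. auto.
Qed.

Lemma lmin_le m s x y : In x s -> In y s -> x <> y -> lmin m s <= dist m x y.
Proof.
  intros. apply (Inf_spec (edge_lengths m s)); [exists (dist m x y)|apply edge_lengths_lb|];
    exists x, y; auto.
Qed.

Lemma lmin_ge m s B : has_edge s ->
  (forall x y, In x s -> In y s -> x <> y -> B <= dist m x y) -> B <= lmin m s.
Proof.
  intros [x [y [Hx [Hy Hxy]]]] H. apply (Inf_spec (edge_lengths m s)).
  - exists (dist m x y), x, y; auto.
  - apply edge_lengths_lb.
  - intros d [a [b [Ha [Hb [Hab ->]]]]]. auto.
Qed.

Lemma lmin_sub m s t : has_edge t -> (forall u, In u t -> In u s) -> lmin m s <= lmin m t.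
Proof. intros Ht Hts. apply lmin_ge; auto. intros x y Hx Hy Hxy. apply lmin_le; auto. Qed.

Lemma lmin_le_Lmax m s : has_edge s -> lmin m s <= Lmax m s.
Proof.
  intros [x [y [Hx [Hy Hxy]]]].
  pose proof (lmin_le m s x y Hx Hy Hxy). pose proof (Lmax_ge m s x y Hx Hy Hxy). lra.
Qed.

Lemma simplex_edge m s q : simplex m s -> In q s -> (2 <= length s)%nat ->
  exists w, In w s /\ w <> q /\ 0 < dist m q w.
Proof.
  intros [Hne [Hnd Hin]] Hq Hl.
  pose proof (rem_len q s Hnd Hq).
  destruct (remove_pt q s) as [|w r] eqn:E; [simpl in H; lia|].
  assert (Hw : In w (remove_pt q s)) by (rewrite E; simpl; auto). apply rem_in in Hw.
  exists w. split; [tauto|]. split; [tauto|].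
  pose proof (dist_nonneg m q w). destruct (Req_dec (dist m q w) 0) as [Z|Z]; [|lra].
  apply (dist_zero m) in Z; try (apply Hin; tauto). destruct Hw; congruence.
Qed.

Lemma Lmax_same m s s' : (forall u, In u s <-> In u s') -> Lmax m s = Lmax m s'.
Proof.
  intros H. unfold Lmax. f_equal. apply functional_extensionality; intro d.
  apply propositional_extensionality.
  split; intros [x [y [Hx [Hy R]]]]; exists x, y; rewrite ?H in *; rewrite <- ?H in *; auto.
Qed.

Lemma altitude_same m q s s' : (forall u, In u s <-> In u s') -> altitude m q s = altitude m q s'.
Proof.
  intros H. unfold altitude. rewrite (aff_same (remove_pt q s) (remove_pt q s')); auto.
  intros u. rewrite !rem_in, H. tauto.
Qed.

Lemma thickness_same m s s' : (forall u, In u s <-> In u s') -> length s = length s' ->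
  thickness m s = thickness m s'.
Proof.
  intros H Hl. unfold thickness. rewrite Hl. destruct (length s' - 1)%nat; auto.
  f_equal. apply functional_extensionality; intro th. apply propositional_extensionality.
  rewrite (Lmax_same m s s' H).
  split; intros [p [Hp E]]; exists p; rewrite (altitude_same m p s s' H) in *; rewrite ?H in *;
    rewrite <- ?H in *; auto.
Qed.

Lemma list_lower_bound (f : Pt -> R) (l : list Pt) : exists b, forall x, In x l -> b <= f x.
Proof.
  induction l as [|a l [b Hb]]; [exists 0; intros x []|].
  exists (Rmin (f a) b). intros x [<-|Hx]; [apply Rmin_l|].
  pose proof (Hb x Hx). pose proof (Rmin_r (f a) b). lra.
Qed.

Lemma thickness_glb m t k : (length t - 1)%nat = S k -> t <> [] ->
  is_glb (fun th => exists p, In p t /\ th = altitude m p t / (INR (S k) * Lmax m t)) (thickness m t).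
Proof.
  intros Hl Hne. unfold thickness. rewrite Hl. apply Inf_spec.
  - destruct t; [congruence|]. eexists; exists p; split; simpl; eauto.
  - destruct (list_lower_bound (fun x => altitude m x t / (INR (S k) * Lmax m t)) t) as [b Hb].
    exists b. intros y [p [Hp ->]]. auto.
Qed.

Lemma thickness_altitude_ge m t k c x : (length t - 1)%nat = S k -> 0 < Lmax m t ->
  thickness m t >= c -> In x t -> c * INR (S k) * Lmax m t <= altitude m x t.
Proof.
  intros Hl HL Ht Hx.
  assert (Hne : t <> []) by (intros ->; contradiction).
  assert (Hj : 0 < INR (S k)) by (apply lt_0_INR; lia).
  assert (HjL : 0 < INR (S k) * Lmax m t) by (apply Rmult_lt_0_compat; auto).
  assert (c <= altitude m x t / (INR (S k) * Lmax m t)).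
  { pose proof (proj1 (thickness_glb m t k Hl Hne) (altitude m x t / (INR (S k) * Lmax m t))).
    assert (thickness m t <= altitude m x t / (INR (S k) * Lmax m t)) by (apply H; eauto). lra. }
  apply Rmult_le_compat_r with (r := INR (S k) * Lmax m t) in H; [|lra].
  replace (altitude m x t / (INR (S k) * Lmax m t) * (INR (S k) * Lmax m t)) with (altitude m x t) in H
    by (field; lra). lra.
Qed.

Lemma thickness_altitude_lt m t k c : (length t - 1)%nat = S k -> 0 < Lmax m t ->
  thickness m t < c -> t <> [] -> exists x, In x t /\ altitude m x t < c * INR (S k) * Lmax m t.
Proof.
  intros Hl HL Ht Hne.
  assert (Hj : 0 < INR (S k)) by (apply lt_0_INR; lia).
  assert (HjL : 0 < INR (S k) * Lmax m t) by (apply Rmult_lt_0_compat; auto).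
  apply NNPP. intros Hn.
  assert (c <= thickness m t).
  { apply (thickness_glb m t k Hl Hne). intros y [p [Hp ->]].
    apply Rmult_le_reg_r with (INR (S k) * Lmax m t); auto.
    replace (altitude m p t / (INR (S k) * Lmax m t) * (INR (S k) * Lmax m t)) with (altitude m p t)
      by (field; lra).
    apply Rnot_lt_le. intros Hlt. apply Hn. exists p. split; auto; lra. }
  lra.
Qed.

Lemma edge_altitude m q s : NoDup s -> In q s -> length s = 2%nat ->
  exists w, In w s /\ w <> q /\ altitude m q s = dist m q w /\ Lmax m s = dist m q w.
Proof.
  intros Hnd Hq Hl. pose proof (rem_len q s Hnd Hq) as Hl'. rewrite Hl in Hl'. simpl in Hl'.
  destruct (remove_pt q s) as [|w [|w' r]] eqn:Hw; try discriminate.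
  assert (Hws : In w s /\ w <> q) by (apply rem_in; rewrite Hw; simpl; auto).
  assert (Hall : forall u, In u s -> u = q \/ u = w).
  { intros u Hu. destruct (pt_eq_dec u q); auto. right.
    assert (In u (remove_pt q s)) by (apply rem_in; auto). rewrite Hw in H. destruct H as [|[]]; auto. }
  exists w. split; [tauto|]. split; [tauto|]. split.
  - unfold altitude. rewrite Hw. apply (foot_dist m [w] q w), foot_single.
  - destruct Hws as [Hws Hwq].
    apply Rle_antisym; [|apply Lmax_ge; auto].
    apply Lmax_le; [exists q, w; auto|]. intros x y Hx Hy Hxy.
    destruct (Hall x Hx) as [->| ->]; destruct (Hall y Hy) as [->| ->]; try congruence; try lra.
    rewrite dist_sym; lra.
Qed.

Lemma simplex_has_edge m s : simplex m s -> (2 <= length s)%nat -> has_edge s.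
Proof.
  intros Hs Hl. destruct s as [|q s']; [simpl in Hl; lia|].
  destruct (simplex_edge m (q :: s') q Hs (or_introl eq_refl) Hl) as [w [Hw [Hwq _]]].
  exists q, w. split; [left; auto|]. auto.
Qed.

Lemma Lmax_pos m s : simplex m s -> (2 <= length s)%nat -> 0 < Lmax m s.
Proof.
  intros Hs Hl. destruct s as [|q s']; [simpl in Hl; lia|].
  destruct (simplex_edge m (q :: s') q Hs (or_introl eq_refl) Hl) as [w [Hw [Hwq Hd]]].
  pose proof (Lmax_ge m (q :: s') q w (or_introl eq_refl) Hw (not_eq_sym Hwq)). lra.
Qed.

Lemma altitude_nonneg m q s v : In v s -> v <> q -> 0 <= altitude m q s.
Proof. intros Hv Hvq. unfold altitude. apply dist_set_nonneg. exists v. apply aff_vertex, rem_in. auto. Qed.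

(* Since its proper faces are good, a flake is itself too thin. *)
Lemma flake_thin m G0 tau : simplex m tau -> flake m G0 tau ->
  thickness m tau < G0 ^ (length tau - 1).
Proof.
  intros [_ [Hnd _]] [Hbad Hproper]. unfold bad, good in Hbad.
  apply not_all_ex_not in Hbad as [t Ht]. apply imply_to_and in Ht as [Hface Hth].
  apply Rnot_ge_lt in Hth.
  destruct Hface as [Htne [Htnd Hincl]].
  destruct (Nat.lt_ge_cases (length t) (length tau)) as [Hlt|Hge].
  - exfalso. specialize (Hproper t (conj Htne (conj Htnd Hincl)) Hlt t (conj Htne (conj Htnd (incl_refl t)))).
    lra.
  - pose proof (NoDup_incl_length Htnd Hincl).
    assert (Hincl' : incl tau t) by (apply NoDup_length_incl; auto).
    assert (Hlen : length t = length tau) by lia.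
    rewrite <- Hlen, <- (thickness_same m t tau); auto.
    intros u; split; [apply Hincl|apply Hincl'].
Qed.

Lemma flake_thin_vertex m G0 tau : simplex m tau -> flake m G0 tau -> 0 < G0 <= 1 ->
  exists q k, In q tau /\ length tau = S (S (S k)) /\
    altitude m q tau < G0 ^ S (S k) * INR (S (S k)) * Lmax m tau.
Proof.
  intros Hs Hfl HG. pose proof (flake_thin m G0 tau Hs Hfl) as Hth.
  destruct tau as [|v [|v' r]] eqn:Etau; [destruct Hs; congruence| |].
  { unfold thickness in Hth. simpl in Hth. lra. }
  rewrite <- Etau in *.
  assert (HL : 0 < Lmax m tau) by (apply Lmax_pos; auto; rewrite Etau; simpl; lia).
  assert (Hl : (length tau - 1)%nat = S (length r)) by (rewrite Etau; simpl; lia).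
  rewrite Hl in Hth.
  destruct (thickness_altitude_lt m tau (length r) _ Hl HL Hth) as [q [Hq Halt]];
    [rewrite Etau; discriminate|].
  destruct r as [|v'' r'].
  - exfalso. destruct Hs as [_ [Hnd _]].
    destruct (edge_altitude m q tau Hnd Hq ltac:(rewrite Etau; reflexivity)) as [w [_ [_ [Ea EL]]]].
    rewrite Ea, EL in Halt. rewrite EL in HL. simpl in Halt. nra.
  - exists q, (length r'). split; auto. split; [rewrite Etau; reflexivity|]. auto.
Qed.

Lemma flake_facet m G0 tau p : simplex m tau -> flake m G0 tau -> 0 < G0 <= 1 -> In p tau ->
  simplex m (remove_pt p tau) /\ has_edge (remove_pt p tau).
Proof.
  intros Hs Hfl HG Hp.
  destruct (flake_thin_vertex m G0 tau Hs Hfl HG) as [_ [k [_ [Hlen _]]]].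
  assert (Hl : (2 <= length (remove_pt p tau))%nat) by (rewrite rem_len; [lia|apply Hs|auto]).
  assert (Hsp : simplex m (remove_pt p tau)) by (apply rem_simplex; auto; lia).
  split; auto. apply (simplex_has_edge m); auto.
Qed.

(** * Exchanging altitudes *)

(* For a nonempty face s and two further points p, q: the product d(p, aff(q::s)) d(q, aff s)
   is symmetric in p and q (both squares equal the Gram determinant of p - Pp, q - Pq). *)
Lemma altitude_product_symmetric m s p q : s <> [] ->
  dist_set m p (aff (q :: s)) * dist_set m q (aff s) <=
  dist_set m q (aff (p :: s)) * dist_set m p (aff s).
Proof.
  intros Hne.
  destruct (foot_exists m s Hne p) as [Pp HPp]. destruct (foot_exists m s Hne q) as [Pq HPq].
  rewrite (foot_dist m s q Pq HPq), (foot_dist m s p Pp HPp).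
  set (h := dist_set m p (aff (q :: s))). set (D := dist_set m q (aff (p :: s))).
  assert (h0 : 0 <= h) by (apply dist_set_nonneg; exists q; apply aff_head).
  assert (D0 : 0 <= D) by (apply dist_set_nonneg; exists p; apply aff_head).
  pose proof (dist_nonneg m p Pp). pose proof (dist_nonneg m q Pq).
  pose proof (dist_sq m q Pq) as Sq. pose proof (dist_sq m p Pp) as Sp.
  destruct (Req_dec (dot m (vsub q Pq) (vsub q Pq)) 0) as [Zq|Zq].
  { assert (dist m q Pq = 0) by nra. rewrite H1. nra. }
  pose proof (dist_aff_cons_sq m s p q Pp Pq HPp HPq Zq) as I1. fold h in I1.
  destruct (Req_dec (dot m (vsub p Pp) (vsub p Pp)) 0) as [Zp|Zp].
  { rewrite Zp, (dot_zero_any m _ _ Zp) in I1. assert (h * dist m q Pq = 0) by nra. rewrite H1. nra. }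
  pose proof (dist_aff_cons_sq m s q p Pq Pp HPq HPp Zp) as I2. fold D in I2.
  rewrite (dot_comm m (vsub q Pq) (vsub p Pp)) in I2.
  assert (Eq : (h * dist m q Pq) * (h * dist m q Pq) = (D * dist m p Pp) * (D * dist m p Pp)).
  { transitivity (h * h * dot m (vsub q Pq) (vsub q Pq)); [rewrite <- Sq; ring|].
    transitivity (D * D * dot m (vsub p Pp) (vsub p Pp)); [|rewrite <- Sp; ring].
    lra. }
  assert (0 <= h * dist m q Pq) by (apply Rmult_le_pos; auto).
  assert (0 <= D * dist m p Pp) by (apply Rmult_le_pos; auto).
  nra.
Qed.

Lemma altitude_exchange m tau p q : In p tau -> In q tau -> p <> q ->
  remove_pt q (remove_pt p tau) <> [] ->
  altitude m p tau * altitude m q (remove_pt p tau) <=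
  altitude m q tau * dist_set m p (aff (remove_pt q (remove_pt p tau))).
Proof.
  intros Hp Hq Hpq Hne. set (s := remove_pt q (remove_pt p tau)) in *.
  assert (Hs : forall u, In u s <-> In u tau /\ u <> p /\ u <> q)
    by (intros u; unfold s; rewrite !rem_in; tauto).
  assert (E1 : aff (remove_pt p tau) = aff (q :: s)).
  { apply aff_same. intros u. rewrite rem_in. simpl. rewrite Hs.
    destruct (pt_eq_dec q u); subst; intuition. }
  assert (E2 : aff (remove_pt q tau) = aff (p :: s)).
  { apply aff_same. intros u. rewrite rem_in. simpl. rewrite Hs.
    destruct (pt_eq_dec p u); subst; intuition. }
  unfold altitude. fold s. rewrite E1, E2. apply altitude_product_symmetric, Hne.
Qed.

(** * Distance to the circumsphere *)

Lemma dist_set_triangle m x y (S : Pt -> Prop) : (exists z, S z) ->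
  dist_set m x S <= dist m x y + dist_set m y S.
Proof.
  intros Hne. cut (dist_set m x S - dist m x y <= dist_set m y S); [lra|].
  apply dist_set_ge; auto. intros z Hz.
  pose proof (dist_set_le m x S z Hz). pose proof (dist_triangle m x y z). lra.
Qed.

Lemma circumcentre_spec m s C Rad : (forall v, In v s -> inRm m v) -> has_edge s ->
  circumscribes m s C Rad ->
  foot m s C (circumcentre m s) /\ circumscribes m s (circumcentre m s) (circumradius m s) /\
  Rad * Rad = dist m C (circumcentre m s) * dist m C (circumcentre m s) +
              circumradius m s * circumradius m s.
Proof.
  intros Hin Hedge Hc.
  assert (Hne : s <> []) by (destruct Hedge as [v [_ [Hv _]]]; intros ->; contradiction).
  destruct (foot_exists m s Hne C) as [c0 Hc0].
  destruct (foot_circumscribes m s C Rad c0 Hin Hedge Hc Hc0) as [r0 [Hr0 ER]].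
  destruct (circ_of_aff_centre m s c0 r0 Hin (proj1 Hc0) Hr0) as [-> ->]. auto.
Qed.

Lemma circumsphere_vertex m s C Rad v : (forall v, In v s -> inRm m v) -> has_edge s ->
  circumscribes m s C Rad -> In v s -> circumsphere m s v.
Proof.
  intros Hin Hedge Hc Hv. destruct (circumcentre_spec m s C Rad Hin Hedge Hc) as [_ [[_ [_ Hr]] _]].
  split; [split; auto|]. apply aff_vertex, Hv.
Qed.

Lemma lmin_le_diameter m s c r : has_edge s -> circumscribes m s c r -> lmin m s <= 2 * r.
Proof.
  intros [v [w [Hv [Hw Hvw]]]] [_ [_ Hc]].
  pose proof (lmin_le m s v w Hv Hw Hvw). pose proof (dist_triangle m v c w).
  rewrite (dist_sym m v c), !Hc in H0 by auto. lra.
Qed.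

(* Radial projection: a point x of aff s is within |d(c0, x) - r0| of the circumsphere. *)
Lemma circumsphere_radial m s c0 r0 x : (forall v, In v s -> inRm m v) ->
  aff s c0 -> circumscribes m s c0 r0 -> aff s x ->
  dist_set m x (circumsphere m s) <= Rabs (dist m c0 x - r0).
Proof.
  intros Hin Hc0 Hcirc Hx.
  destruct (circ_of_aff_centre m s c0 r0 Hin Hc0 Hcirc) as [Ec Er].
  destruct Hcirc as [c0in [Hr0 Hc0v]].
  assert (Hne : s <> []) by (intros ->; eapply aff_nil; eauto).
  set (a := dist m c0 x).
  assert (Hsph : forall y, aff s y -> dist m c0 y = r0 -> circumsphere m s y).
  { intros y Hy Hd. split; [split|]; auto. eapply aff_inRm; eauto. rewrite Ec, Er. auto. }
  destruct (Req_dec a 0) as [Za|Za].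
  - destruct s as [|w s']; [congruence|].
    assert (Hw : circumsphere m (w :: s') w) by (apply Hsph; [apply aff_head | apply Hc0v; left; auto]).
    eapply Rle_trans; [apply (dist_set_le m x _ w Hw)|].
    pose proof (dist_triangle m x c0 w). rewrite (dist_sym m x c0), (Hc0v w) in H by (simpl; auto).
    fold a in H. rewrite Za, Rminus_0_l, Rabs_Ropp, Rabs_pos_eq by lra. lra.
  - assert (Ha : 0 < a) by (pose proof (dist_nonneg m c0 x); unfold a in *; lra).
    set (y := vadd c0 (vscal (r0 / a) (vsub x c0))).
    assert (Ea2 : dot m (vsub x c0) (vsub x c0) = a * a) by (unfold a; rewrite dist_sym, dist_sq; auto).
    assert (Hy : circumsphere m s y).
    { apply Hsph; [apply aff_translate; auto|].
      assert (dist m c0 y * dist m c0 y = r0 * r0).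
      { rewrite dist_sq. replace (vsub c0 y) with (vscal (- (r0 / a)) (vsub x c0)) by (unfold y; vec_eq).
        rewrite dot_scal_l, dot_scal_r, Ea2. field. lra. }
      pose proof (dist_nonneg m c0 y). nra. }
    eapply Rle_trans; [apply (dist_set_le m x _ y Hy)|].
    assert (dist m x y * dist m x y = Rabs (a - r0) * Rabs (a - r0)).
    { rewrite dist_sq, <- Rabs_mult, Rabs_pos_eq by (apply Rle_0_sqr).
      replace (vsub x y) with (vscal (1 - r0 / a) (vsub x c0)) by (unfold y; vec_eq).
      rewrite dot_scal_l, dot_scal_r, Ea2. field. lra. }
    pose proof (dist_nonneg m x y). pose proof (Rabs_pos (a - r0)). nra.
Qed.

(* Elementary inequality behind the comparison of the two spheres: with s^2 = a^2 + H^2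
   and Rad^2 = r0^2 + H^2, |a - r0| r0 <= |s - Rad| 2 Rad. *)
Lemma sphere_gap_num a r0 H s Rad : 0 <= a -> 0 < r0 -> 0 <= H -> 0 <= s -> 0 < Rad ->
  s * s = a * a + H * H -> Rad * Rad = r0 * r0 + H * H ->
  Rabs (a - r0) * r0 <= Rabs (s - Rad) * (2 * Rad).
Proof.
  intros Ha Hr HH Hs HR Es ER.
  assert (HRr : r0 <= Rad) by nra.
  assert (Hsa : s <= a + H) by nra.
  assert (K : Rabs (a - r0) * (a + r0) = Rabs (s - Rad) * (s + Rad)).
  { rewrite <- (Rabs_pos_eq (a + r0)), <- (Rabs_pos_eq (s + Rad)), <- !Rabs_mult by lra.
    f_equal. nra. }
  pose proof (Rabs_pos (a - r0)). pose proof (Rabs_pos (s - Rad)).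
  assert (HHR : H <= Rad) by nra.
  assert (Hsr : s + Rad <= a + 2 * Rad) by lra.
  assert (Rabs (a - r0) * (a + r0) * r0 <= Rabs (s - Rad) * (2 * Rad) * (a + r0)).
  { rewrite K.
    apply Rle_trans with (Rabs (s - Rad) * ((a + 2 * Rad) * r0)).
    - rewrite Rmult_assoc. apply Rmult_le_compat_l; [lra|]. apply Rmult_le_compat_r; lra.
    - rewrite Rmult_assoc. apply Rmult_le_compat_l; nra. }
  apply Rmult_le_reg_r with (a + r0); nra.
Qed.

Lemma sphere_gap m s C Rad x : (forall v, In v s -> inRm m v) -> has_edge s ->
  circumscribes m s C Rad -> aff s x ->
  Rabs (dist m (circumcentre m s) x - circumradius m s) * circumradius m s <=
  Rabs (dist m x C - Rad) * (2 * Rad).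
Proof.
  intros Hin Hedge Hc Hx.
  destruct (circumcentre_spec m s C Rad Hin Hedge Hc) as [Hfoot [[_ [Hr0 _]] ER]].
  pose proof (pythagoras m s C _ x Hfoot Hx).
  apply sphere_gap_num with (H := dist m C (circumcentre m s)); try apply dist_nonneg; auto.
  - apply Hc.
  - rewrite dist_sym. lra.
  - lra.
Qed.

Lemma sphere_offset m s C Rad p : (forall v, In v s -> inRm m v) -> s <> [] ->
  circumscribes m s C Rad -> Rabs (dist m p C - Rad) <= dist_set m p (sphere m C Rad).
Proof.
  intros Hin Hne [HCin [_ HCv]]. destruct s as [|w s']; [congruence|].
  apply dist_set_ge.
  - exists w. split; [apply Hin|apply HCv]; left; auto.
  - intros z [_ Hz]. rewrite <- Hz, (dist_sym m C z). apply dist_rev.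
Qed.

Lemma circumsphere_distance_estimate m s C Rad p : (forall v, In v s -> inRm m v) -> has_edge s ->
  circumscribes m s C Rad ->
  dist_set m p (circumsphere m s) <=
  dist_set m p (aff s) +
  (dist_set m p (sphere m C Rad) + dist_set m p (aff s)) * (2 * Rad / circumradius m s).
Proof.
  intros Hin Hedge Hc.
  assert (Hne : s <> []) by (destruct Hedge as [v [_ [Hv _]]]; intros ->; contradiction).
  destruct (circumcentre_spec m s C Rad Hin Hedge Hc) as [Hfoot [Hcirc _]].
  destruct (foot_exists m s Hne p) as [ps Hps]. rewrite (foot_dist m s p ps Hps).
  set (r0 := circumradius m s) in *. set (h := dist m p ps).
  assert (Hr0 : 0 < r0) by apply (proj1 (proj2 Hcirc)).
  assert (HRad : 0 < Rad) by apply (proj1 (proj2 Hc)).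
  assert (HS : exists y, circumsphere m s y).
  { pose proof Hedge as [v [_ [Hv _]]]. exists v. eapply circumsphere_vertex; eauto. }
  pose proof (dist_set_triangle m p ps _ HS) as Htri. fold h in Htri.
  pose proof (circumsphere_radial m s _ r0 ps Hin (proj1 Hfoot) Hcirc (proj1 Hps)) as Hrad.
  pose proof (sphere_gap m s C Rad ps Hin Hedge Hc (proj1 Hps)) as Hgap. fold r0 in Hgap.
  pose proof (sphere_offset m s C Rad p Hin Hne Hc) as Hoff.
  assert (Hmove : Rabs (dist m ps C - Rad) <= Rabs (dist m p C - Rad) + h).
  { pose proof (dist_rev m ps p C). rewrite (dist_sym m ps p) in H. fold h in H.
    pose proof (Rabs_triang (dist m ps C - dist m p C) (dist m p C - Rad)).
    replace (dist m ps C - dist m p C + (dist m p C - Rad)) with (dist m ps C - Rad) in H0 by ring.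
    lra. }
  assert (Hratio : 0 <= 2 * Rad / r0) by (apply Rmult_le_pos; [lra|apply Rlt_le, Rinv_0_lt_compat, Hr0]).
  assert (Rabs (dist m (circumcentre m s) ps - r0) <= Rabs (dist m ps C - Rad) * (2 * Rad / r0)).
  { apply Rmult_le_reg_r with r0; auto. unfold Rdiv.
    replace (Rabs (dist m ps C - Rad) * (2 * Rad * / r0) * r0) with (Rabs (dist m ps C - Rad) * (2 * Rad))
      by (field; lra). auto. }
  assert (Rabs (dist m ps C - Rad) * (2 * Rad / r0) <=
          (dist_set m p (sphere m C Rad) + h) * (2 * Rad / r0)) by (apply Rmult_le_compat_r; lra).
  lra.
Qed.

(** * The altitude of a vertex of a flake *)

(* For G0 <= 1/2, (n+1) G0^n <= 1: the factor j G0^(j-1) in the flake bound is harmless. *)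
Lemma pow_small G n : 0 <= G <= 1/2 -> INR (S n) * G ^ n <= 1.
Proof.
  intros HG. induction n; [simpl; lra|].
  change (G ^ S n) with (G * G ^ n). rewrite !S_INR in *. pose proof (pow_le G n (proj1 HG)). pose proof (pos_INR n).
  assert ((INR n + 1 + 1) * (G * G ^ n) <= (INR n + 1 + 1) * (1/2 * G ^ n))
    by (apply Rmult_le_compat_l; [lra|]; apply Rmult_le_compat_r; lra).
  nra.
Qed.

Lemma flake_facet_thick m G0 tau p : simplex m tau -> flake m G0 tau -> In p tau ->
  (2 <= length tau)%nat -> thickness m (remove_pt p tau) >= G0 ^ (length (remove_pt p tau) - 1).
Proof.
  intros Hs [_ Hproper] Hp Hl. pose proof (rem_simplex m p tau Hs Hp Hl) as [Hne [Hnd _]].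
  assert (Hface : is_face tau (remove_pt p tau)).
  { split; [|split]; auto. intros u Hu. apply (rem_in p tau u), Hu. }
  assert (Hlt : (length (remove_pt p tau) < length tau)%nat)
    by (rewrite rem_len by (auto; apply Hs); lia).
  apply (Hproper _ Hface Hlt). split; [|split]; auto. apply incl_refl.
Qed.

Section FlakeAltitude.

Variables (m : nat) (eps' mu' G0 : R) (tau : list Pt).
Hypotheses (Heps : 0 < eps') (Hmu : 0 < mu' <= 1) (HG : 0 < G0 <= 1/36)
  (Hsimp : simplex m tau) (Hflake : flake m G0 tau)
  (HL : Lmax m tau <= 3 * eps') (Hl : lmin m tau >= mu' * eps').

(* Consequence of the altitude exchange, bounding d(p, aff tau_pq) by L(tau). *)
Lemma exchange_estimate p q : In p tau -> In q tau -> p <> q -> (3 <= length tau)%nat ->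
  altitude m p tau * altitude m q (remove_pt p tau) <= altitude m q tau * (3 * eps').
Proof.
  intros Hp Hq Hpq Hlen. destruct Hsimp as [_ [Hnd _]].
  set (s := remove_pt q (remove_pt p tau)).
  assert (Hs : forall u, In u s <-> In u tau /\ u <> p /\ u <> q)
    by (intros u; unfold s; rewrite !rem_in; tauto).
  assert (Hlens : length s = (length tau - 2)%nat).
  { unfold s. rewrite (rem_len q), (rem_len p); auto; [lia|apply rem_nodup; auto|apply rem_in; auto]. }
  destruct s as [|v s'] eqn:Es; [simpl in Hlens; lia|].
  assert (Hv : In v tau /\ v <> p /\ v <> q) by (apply Hs; left; auto).
  pose proof (altitude_exchange m tau p q Hp Hq Hpq ltac:(fold s; rewrite Es; discriminate)) as Hex.
  fold s in Hex. rewrite Es in Hex.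
  assert (Hd : dist_set m p (aff (v :: s')) <= 3 * eps').
  { pose proof (dist_set_le m p _ v (aff_head v s')).
    pose proof (Lmax_ge m tau p v Hp (proj1 Hv) (not_eq_sym (proj1 (proj2 Hv)))). lra. }
  assert (HD : 0 <= altitude m q tau) by (apply (altitude_nonneg m q tau p); auto).
  assert (altitude m q tau * dist_set m p (aff (v :: s')) <= altitude m q tau * (3 * eps'))
    by (apply Rmult_le_compat_l; auto).
  lra.
Qed.

(* Case 1: p is itself the thin vertex of the flake. *)
Lemma altitude_bound_self p k : In p tau -> length tau = S (S (S k)) ->
  altitude m p tau < G0 ^ S (S k) * INR (S (S k)) * Lmax m tau ->
  altitude m p tau * mu' <= 27/2 * G0 * eps'.
Proof.
  intros Hp Hlen Hthin.
  assert (Hpow : INR (S (S k)) * G0 ^ S k <= 1) by (apply pow_small; lra).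
  destruct (simplex_edge m tau p Hsimp Hp ltac:(lia)) as [w [Hw [Hwp _]]].
  pose proof (altitude_nonneg m p tau w Hw Hwp).
  assert (HL0 : 0 < Lmax m tau) by (apply Lmax_pos; auto; lia).
  assert (altitude m p tau <= G0 * Lmax m tau).
  { replace (G0 ^ S (S k) * INR (S (S k)) * Lmax m tau)
      with (G0 * (INR (S (S k)) * G0 ^ S k) * Lmax m tau) in Hthin by (simpl; ring).
    assert (G0 * (INR (S (S k)) * G0 ^ S k) * Lmax m tau <= G0 * 1 * Lmax m tau)
      by (apply Rmult_le_compat_r; [lra|]; apply Rmult_le_compat_l; lra).
    lra. }
  nra.
Qed.

(* Case 2: the flake is a triangle and the thin vertex q differs from p; the facet
   tau_p is an edge, whose altitude is its length, at least mu' eps'. *)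
Lemma altitude_bound_edge p q : In p tau -> In q tau -> p <> q -> length tau = 3%nat ->
  altitude m q tau < G0 ^ 2 * INR 2 * Lmax m tau ->
  altitude m p tau * mu' <= 27/2 * G0 * eps'.
Proof.
  intros Hp Hq Hpq Hlen Hthin. pose proof Hsimp as [_ [Hnd _]].
  assert (Hqtp : In q (remove_pt p tau)) by (apply rem_in; auto).
  destruct (edge_altitude m q (remove_pt p tau) (rem_nodup p tau Hnd) Hqtp
              ltac:(rewrite rem_len; auto; lia)) as [w [Hw [Hwq [Ea _]]]].
  apply rem_in in Hw as [Hw Hwp].
  assert (Hqw : mu' * eps' <= dist m q w) by (pose proof (lmin_le m tau q w Hq Hw (not_eq_sym Hwq)); lra).
  pose proof (exchange_estimate p q Hp Hq Hpq ltac:(lia)) as Hex. rewrite Ea in Hex.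
  pose proof (altitude_nonneg m p tau q Hq (not_eq_sym Hpq)) as Hh.
  assert (HD : altitude m q tau * (3 * eps') <= 18 * G0 ^ 2 * eps' * eps').
  { replace (INR 2) with 2 in Hthin by (simpl; lra). nra. }
  assert (Hh2 : altitude m p tau * mu' * eps' <= 18 * G0 ^ 2 * eps' * eps').
  { assert (altitude m p tau * (mu' * eps') <= altitude m p tau * dist m q w)
      by (apply Rmult_le_compat_l; auto). lra. }
  assert (altitude m p tau * mu' <= 18 * G0 ^ 2 * eps')
    by (apply Rmult_le_reg_r with eps'; auto; lra).
  assert (H18 : 18 * G0 ^ 2 <= 27/2 * G0) by (simpl; nra).
  apply Rmult_le_compat_r with (r := eps') in H18; lra.
Qed.

(* Case 3: the facet tau_p has dimension n >= 2; being a proper face of the flake it is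
   thick, so D(q, tau_p) >= G0^n n L(tau_p) >= G0^n n mu' eps'. *)
Lemma altitude_bound_face p q k : In p tau -> In q tau -> p <> q -> length tau = S (S (S (S k))) ->
  altitude m q tau < G0 ^ S (S (S k)) * INR (S (S (S k))) * Lmax m tau ->
  altitude m p tau * mu' <= 27/2 * G0 * eps'.
Proof.
  intros Hp Hq Hpq Hlen Hthin. pose proof Hsimp as [_ [Hnd _]].
  set (tp := remove_pt p tau).
  assert (Hlentp : (length tp - 1)%nat = S (S k)) by (unfold tp; rewrite rem_len; auto; lia).
  assert (Hqtp : In q tp) by (apply rem_in; auto).
  assert (Hstp : simplex m tp) by (apply rem_simplex; auto; lia).
  destruct (simplex_edge m tp q Hstp Hqtp ltac:(lia)) as [w [Hw [Hwq _]]].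
  assert (Hedge : has_edge tp) by (exists q, w; auto).
  assert (HLtp : mu' * eps' <= Lmax m tp).
  { pose proof (lmin_sub m tau tp Hedge (fun u Hu => proj1 (proj1 (rem_in p tau u) Hu))).
    pose proof (lmin_le_Lmax m tp Hedge). lra. }
  pose proof (flake_facet_thick m G0 tau p Hsimp Hflake Hp ltac:(lia)) as Hthick.
  fold tp in Hthick. rewrite Hlentp in Hthick.
  pose proof (thickness_altitude_ge m tp (S k) _ q Hlentp ltac:(nra) Hthick Hqtp) as Hface.
  set (n := INR (S (S k))) in *. set (X := G0 ^ S (S k)) in *.
  assert (Hn : 2 <= n) by (unfold n; rewrite !S_INR; pose proof (pos_INR k); lra).
  assert (HX : 0 < X) by (apply pow_lt; lra).
  assert (Haq : X * n * (mu' * eps') <= altitude m q tp).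
  { assert (X * n * (mu' * eps') <= X * n * Lmax m tp) by (apply Rmult_le_compat_l; nra). lra. }
  pose proof (exchange_estimate p q Hp Hq Hpq ltac:(lia)) as Hex. fold tp in Hex.
  pose proof (altitude_nonneg m p tau q Hq (not_eq_sym Hpq)) as Hh.
  assert (HD : altitude m q tau <= G0 * X * (n + 1) * (3 * eps')).
  { replace (G0 ^ S (S (S k)) * INR (S (S (S k))) * Lmax m tau) with (G0 * X * (n + 1) * Lmax m tau) in Hthin
      by (unfold X, n; rewrite (S_INR (S (S k))); simpl; ring).
    assert (G0 * X * (n + 1) * Lmax m tau <= G0 * X * (n + 1) * (3 * eps'))
      by (apply Rmult_le_compat_l; [|lra]; apply Rmult_le_pos; nra).
    lra. }
  assert (Hkey : altitude m p tau * n * mu' * (X * eps') <= 9 * G0 * (n + 1) * eps' * (X * eps')).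
  { assert (altitude m p tau * (X * n * (mu' * eps')) <= altitude m p tau * altitude m q tp)
      by (apply Rmult_le_compat_l; auto).
    assert (altitude m q tau * (3 * eps') <= G0 * X * (n + 1) * (3 * eps') * (3 * eps'))
      by (apply Rmult_le_compat_r; lra).
    nra. }
  assert (altitude m p tau * n * mu' <= 9 * G0 * (n + 1) * eps')
    by (apply Rmult_le_reg_r with (X * eps'); [nra|lra]).
  assert (Hn' : 9 * (n + 1) <= 27/2 * n) by lra.
  apply Rmult_le_compat_r with (r := G0 * eps') in Hn'; [|nra].
  apply Rmult_le_reg_r with n; lra.
Qed.

Lemma flake_altitude_bound p : In p tau -> altitude m p tau * mu' <= 27/2 * G0 * eps'.
Proof.
  intros Hp.
  destruct (flake_thin_vertex m G0 tau Hsimp Hflake ltac:(lra)) as [q [k [Hq [Hlen Hthin]]]].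
  destruct (pt_eq_dec q p) as [<-|Hqp]; [eapply altitude_bound_self; eauto|].
  destruct k as [|k].
  - apply (altitude_bound_edge p q); auto.
  - apply (altitude_bound_face p q k); auto.
Qed.

End FlakeAltitude.

(* Small G0: combine the geometric estimate with the altitude bound.  With u = 1/mu:
   2 Rad / r0 <= 6 u, h (1 + 2 Rad / r0) <= 7 u h <= 189 u^3 G0 r0, dl 2 Rad / r0 <= 12 u d0 r0. *)
Lemma final_estimate eps mu d0 G0 h dl r0 Rad X :
  0 < eps -> 0 < mu <= 1 -> 0 <= d0 -> 0 < G0 ->
  0 <= h -> h * mu <= 27/2 * G0 * eps -> 0 <= dl -> dl <= 2 * d0 * r0 ->
  mu * eps <= 2 * r0 -> 0 < Rad < 3/2 * eps -> X <= h + (dl + h) * (2 * Rad / r0) ->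
  X <= (14 / mu * d0 + 216 / mu ^ 3 * G0) * r0.
Proof.
  intros He Hm Hd HG Hh0 Hh Hdl0 Hdl Hr HR HX.
  assert (Hr0 : 0 < r0) by nra.
  set (u := / mu). assert (Hu : mu * u = 1) by (unfold u; field; lra).
  assert (Hu1 : 1 <= u) by nra.
  replace (14 / mu * d0 + 216 / mu ^ 3 * G0) with (14 * u * d0 + 216 * u ^ 3 * G0)
    by (unfold u; field; lra).
  set (q := 2 * Rad / r0) in HX.
  assert (Hq0 : 0 <= q) by (unfold q; apply Rmult_le_pos; [lra|apply Rlt_le, Rinv_0_lt_compat, Hr0]).
  assert (Hqr : q * r0 = 2 * Rad) by (unfold q; field; lra).
  assert (Heps : eps <= 2 * r0 * u) by nra.
  assert (Hq : q <= 6 * u) by nra.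
  assert (Hhu : h <= 27 * G0 * r0 * u * u).
  { assert (E : h = h * mu * u) by (rewrite Rmult_assoc, Hu; ring).
    assert (h * mu * u <= 27/2 * G0 * eps * u) by (apply Rmult_le_compat_r; lra).
    assert (27/2 * G0 * eps * u <= 27/2 * G0 * (2 * r0 * u) * u)
      by (apply Rmult_le_compat_r; [lra|]; apply Rmult_le_compat_l; lra).
    lra. }
  assert (Tdl : dl * q <= 12 * u * d0 * r0) by nra.
  assert (Th : h + h * q <= 7 * u * h) by nra.
  assert (Th' : 7 * u * h <= 189 * u ^ 3 * G0 * r0) by (simpl; nra).
  assert (0 <= u * d0 * r0) by nra.
  assert (0 <= u ^ 3 * G0 * r0) by (apply Rmult_le_pos; [apply Rmult_le_pos|]; [apply pow_le|..]; lra).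
  nra.
Qed.

(* Large G0: the trivial bound d(p, S) <= L(tau) <= 3 eps' already suffices. *)
Lemma large_G0_estimate eps mu d0 G0 r0 X :
  0 < eps -> 0 < mu <= 1 -> 0 <= d0 -> mu ^ 2 / 36 < G0 -> mu * eps <= 2 * r0 -> X <= 3 * eps ->
  X <= (14 / mu * d0 + 216 / mu ^ 3 * G0) * r0.
Proof.
  intros He Hm Hd HG Hr HX.
  assert (Hr0 : 0 < r0) by nra.
  set (u := / mu). assert (Hu : mu * u = 1) by (unfold u; field; lra).
  assert (Hu0 : 0 < u) by nra.
  replace (14 / mu * d0 + 216 / mu ^ 3 * G0) with (14 * u * d0 + 216 * u ^ 3 * G0)
    by (unfold u; field; lra).
  assert (Hmu3 : 216 * u ^ 3 * (mu ^ 2 / 36) = 6 * u) 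
    by (replace (216 * u ^ 3 * (mu ^ 2 / 36)) with (6 * u * (mu * u) ^ 2) by field; rewrite Hu; ring).
  assert (Heps : eps <= 2 * r0 * u) by nra.
  assert (216 * u ^ 3 * (mu ^ 2 / 36) * r0 <= 216 * u ^ 3 * G0 * r0).
  { apply Rmult_le_compat_r; [lra|]. apply Rmult_le_compat_l; [|lra]. assert (0 < u ^ 3) by (apply pow_lt; lra). lra. }
  assert (0 <= u * d0 * r0) by nra.
  nra.
Qed.

Theorem mainTheorem9 (m : nat) (eps' mu' G0 : R) (tau : list Pt) :
  0 < eps' -> 0 < mu' <= 1 -> 0 < G0 <= 1 ->
  simplex m tau -> flake m G0 tau ->
  Lmax m tau <= 3 * eps' -> lmin m tau >= mu' * eps' ->
  forall (p C : Pt) (Rad delta0 : R),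
    In p tau ->
    circumscribes m (remove_pt p tau) C Rad ->
    Rad < 3 / 2 * eps' ->
    0 <= delta0 ->
    dist_set m p (sphere m C Rad) <= delta0 * lmin m (remove_pt p tau) ->
    dist_set m p (circumsphere m (remove_pt p tau)) <=
      (14 / mu' * delta0 + 216 / mu' ^ 3 * G0) * circumradius m (remove_pt p tau).
Proof.
  intros Heps Hmu HG Hsimp Hflake HL Hl p C Rad d0 Hp Hcirc HRad Hd0 Hdel.
  destruct (flake_facet m G0 tau p Hsimp Hflake HG Hp) as [[_ [_ Hin]] Hedge].
  set (tp := remove_pt p tau) in *.
  destruct (circumcentre_spec m tp C Rad Hin Hedge Hcirc) as [_ [Hc0 _]].
  pose proof (lmin_le_diameter m tp _ _ Hedge Hc0) as Hdiam.
  pose proof (lmin_sub m tau tp Hedge (fun u Hu => proj1 (proj1 (rem_in p tau u) Hu))) as Hlmin.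
  pose proof Hedge as [w [_ [Hw _]]]. pose proof (proj1 (rem_in p tau w) Hw) as [Hwtau Hwp].
  destruct (Rle_lt_dec G0 (mu' ^ 2 / 36)) as [Gsmall|Glarge].
  - apply final_estimate with (eps := eps') (h := altitude m p tau)
      (dl := dist_set m p (sphere m C Rad)) (Rad := Rad); try lra.
    + apply (altitude_nonneg m p tau w); auto.
    + apply (flake_altitude_bound m eps' mu' G0 tau); auto. split; [lra|nra].
    + apply dist_set_nonneg. exists w. split; [apply Hin, Hw|apply Hcirc, Hw].
    + nra.
    + split; [apply Hcirc|lra].
    + apply circumsphere_distance_estimate; auto.
  - apply large_G0_estimate with (eps := eps'); auto; try lra.
    pose proof (dist_set_le m p _ w (circumsphere_vertex m tp C Rad w Hin Hedge Hcirc Hw)).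
    pose proof (Lmax_ge m tau p w Hp Hwtau (not_eq_sym Hwp)). lra.
Qed.
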